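(* Let $N\in\mathbb{N}$, $N\geqslant2$, and let $f:[0,1]\times\mathbb{R}\to\mathbb{R}$ be continuous with continuous partial derivative $f_x$ with respect to the second variable, satisfying $\inf_{[0,1]\times\mathbb{R}}f_x>-1$. Then for every $x\in\mathbb{E}_N$ the linear operator $D_N'(x):\mathbb{E}_N\to\mathbb{E}_N$ is invertible.
   Context: $\mathbb{E}_N$ is the space of $x:\{0,\dots,N\}\to\mathbb{R}$ with $x(0)=x(N)=0$. $\Delta x(k-1)=x(k)-x(k-1)$, $\Delta^2x(k-1)=x(k+1)-2x(k)+x(k-1)$. $D_N:\mathbb{E}_N\to\mathbb{E}_N$ is $(D_Nx)(k)=\Delta^2x(k-1)-\frac{1}{N^2}f(\frac kN,x(k))$ for $k=1,\dots,N-1$, $(D_Nx)(0)=(D_Nx)(N)=0$; its derivative at $x$ is $D_N'(x)h(k)=\Delta^2h(k-1)-\frac{1}{N^2}f_x(\frac kN,x(k))h(k)$ for $k=1,\dots,N-1$ and $0$ at $k=0,N$. *)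

From HB Require Import structures.
From mathcomp Require Import all_boot all_order all_algebra.
From mathcomp Require Import all_classical all_reals all_analysis.
Set Implicit Arguments. Unset Strict Implicit. Unset Printing Implicit Defensive.
Import Order.TTheory GRing.Theory Num.Theory.
Import numFieldNormedType.Exports.
Local Open Scope classical_set_scope.
Local Open Scope ring_scope.

(* Elements of E_N are represented by functions nat -> R; only the values on
   {0,...,N} matter. *)
Definition EN {R : realType} (N : nat) (x : nat -> R) : Prop :=
  x 0%N = 0 /\ x N = 0.

Definition fx {R : realType} (f : R -> R -> R) (t s : R) : R :=
  derive1 (f t) s.

Definition DNp {R : realType} (f : R -> R -> R) (N : nat) (x h : nat -> R)
  : nat -> R :=
  fun k => if (0 < k < N)%N then
             (h k.+1 - 2 * h k + h k.-1)
             - (N%:R ^+ 2)^-1 * fx f (k%:R / N%:R) (x k) * h k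
           else 0.

(* Invertibility of a map L : E_N -> E_N (elements identified when they
   agree on {0..N}): L maps E_N into E_N and is a bijection of E_N. *)
Definition invertible_on_EN {R : realType} (N : nat)
  (L : (nat -> R) -> (nat -> R)) : Prop :=
  (forall h, EN N h -> EN N (L h)) /\
  (forall y, EN N y -> exists h, EN N h /\ forall k, (k <= N)%N -> L h k = y k) /\
  (forall h1 h2, EN N h1 -> EN N h2 ->
     (forall k, (k <= N)%N -> L h1 k = L h2 k) ->
     forall k, (k <= N)%N -> h1 k = h2 k).

From HB Require Import structures.
From mathcomp Require Import all_boot all_order all_algebra.
From mathcomp Require Import all_classical all_reals all_analysis.
From mathcomp Require Import ring lra zify.
Import Order.TTheory GRing.Theory Num.Theory.
Import numFieldNormedType.Exports.
Local Open Scope classical_set_scope.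
Local Open Scope ring_scope.

(* Write D_N'(x) h = Δ²h - c h with c k = f_x(k/N, x k) / N².  The
   equation D_N'(x) h = y is the recurrence h (k+1) = (2 + c k) h k - h (k-1) + y k,
   so its solutions with h 0 = 0 form a line s + b u, where u solves the
   homogeneous recurrence with u 0 = 0, u 1 = 1; hence D_N'(x) is invertible on
   E_N as soon as u N <> 0.  Positivity of u on {1..N} is a discrete Sturm
   comparison: if v > 0 is a supersolution, the ratio u/v is nondecreasing.  The
   parabola v k = k (2N - k) has Δ²v = -2 and 0 <= v <= N² on {0..N}, so it is a
   supersolution as soon as f_x >= -2. *)

Section Shooting.
Variables (R : comPzRingType) (c : nat -> R).

Fixpoint shoot_pair (g : nat -> R) (a b : R) (n : nat) : R * R :=
  if n is n'.+1 then
    let: (p, q) := shoot_pair g a b n' in (q, (2 + c n) * q - p + g n)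
  else (a, b).

Definition shoot g a b n := (shoot_pair g a b n).1.

Lemma shoot0 g a b : shoot g a b 0 = a. Proof. by []. Qed.

Lemma shoot1 g a b : shoot g a b 1 = b. Proof. by []. Qed.

Lemma shootSS g a b n :
  shoot g a b n.+2 = (2 + c n.+1) * shoot g a b n.+1 - shoot g a b n + g n.+1.
Proof. by rewrite /shoot /=; case: shoot_pair. Qed.

Lemma shoot_affine g a b n :
  shoot g a b n = shoot g a 0 n + b * shoot (fun=> 0) 0 1 n.
Proof.
elim/ltn_ind: n => -[|[|n]] IH; rewrite ?shoot0 ?shoot1 ?mulr0 ?mulr1 ?addr0 ?add0r //.
by rewrite !shootSS (IH n.+1) // (IH n) //; ring.
Qed.

Lemma shoot_unique (g h : nat -> R) (N : nat) :
  (forall n, (n.+2 <= N)%N -> h n.+2 = (2 + c n.+1) * h n.+1 - h n + g n.+1) ->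
  forall n, (n <= N)%N -> h n = shoot g (h 0%N) (h 1%N) n.
Proof.
move=> h_rec; elim/ltn_ind => -[|[|n]] IH nN //.
by rewrite shootSS h_rec // -(IH n) -?(IH n.+1) //; lia.
Qed.

End Shooting.

Arguments shoot {R} c g a b n.

Section SturmComparison.
Variables (R : realFieldType) (c : nat -> R) (N : nat) (v : nat -> R).
Hypothesis v0_ge0 : 0 <= v 0%N.
Hypothesis v_gt0 : forall n, (0 < n <= N)%N -> 0 < v n.
Hypothesis v_super :
  forall n, (n.+2 <= N)%N -> v n.+2 <= (2 + c n.+1) * v n.+1 - v n.

Let u := shoot c (fun=> 0) 0 1.

Lemma shoot_gt0 n : (0 < n <= N)%N -> 0 < u n.
Proof.
have ratio_mono k : (k < N)%N -> 0 < u k.+1 /\ v k.+1 * u k <= v k * u k.+1.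
  elim: k => [|k IH] kN; first by rewrite /u shoot0 shoot1 mulr0 mulr1.
  have [u_gt0 ratio] := IH (ltnW kN).
  have vk1 : 0 < v k.+1 by apply: v_gt0; lia.
  have vk2 : 0 < v k.+2 by apply: v_gt0; lia.
  have super := v_super k kN.
  have ratio' : v k.+2 * u k.+1 <= v k.+1 * u k.+2.
    by rewrite /u shootSS addr0 -/u; nra.
  by split=> //; nra.
by case: n => [//|n] /andP[_ nN]; have [] := ratio_mono n nN.
Qed.

End SturmComparison.

Definition parabola {R : pzRingType} (N n : nat) : R := n%:R * (2 * N%:R - n%:R).

Lemma parabola_gt0 (R : realDomainType) (N n : nat) :
  (0 < n <= N)%N -> 0 < parabola N n :> R.
Proof.
move=> /andP[n_gt0 nN]; rewrite /parabola mulr_gt0 ?ltr0n // subr_gt0.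
by rewrite -natrM ltr_nat; lia.
Qed.

Lemma parabola_le_sqr (R : realDomainType) (N n : nat) :
  parabola N n <= N%:R ^+ 2 :> R.
Proof.
have -> : N%:R ^+ 2 = parabola N n + (N%:R - n%:R) ^+ 2 :> R.
  by rewrite /parabola; ring.
by rewrite lerDl sqr_ge0.
Qed.

Lemma parabola_diff2 (R : comPzRingType) (N n : nat) :
  parabola N n.+2 - 2 * parabola N n.+1 + parabola N n = -2 :> R.
Proof. by rewrite /parabola -!natr1; ring. Qed.

Lemma parabola_scaled_ge (R : realFieldType) (N n : nat) (F : R) :
  (0 < n <= N)%N -> -2 <= F -> -2 <= parabola N n * ((N%:R ^+ 2)^-1 * F).
Proof.
move=> nN F_ge; have N_gt0 : 0 < N%:R :> R by rewrite ltr0n; lia.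
rewrite mulrA; set w := _ / _.
have w_ge0 : 0 <= w by rewrite divr_ge0 ?exprn_ge0 ?ltW ?parabola_gt0.
have w_le1 : w <= 1 by rewrite ler_pdivrMr ?exprn_gt0 // mul1r parabola_le_sqr.
have : 0 <= w * (F + 2) by rewrite mulr_ge0 //; lra.
lra.
Qed.

Lemma shoot_end_gt0 (R : realFieldType) (c : nat -> R) (N : nat) :
  (0 < N)%N -> (forall n, (0 < n < N)%N -> -2 <= parabola N n * c n) ->
  0 < shoot c (fun=> 0) 0 1 N.
Proof.
move=> N_gt0 c_ge; apply: (@shoot_gt0 R c N (parabola N)).
- by rewrite /parabola mul0r.
- exact: parabola_gt0.
- move=> n nN; have : -2 <= parabola N n.+1 * c n.+1 by apply: c_ge; lia.
  have := parabola_diff2 R N n; lra.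
- by rewrite N_gt0 leqnn.
Qed.

Section DirichletOperator.
Variables (R : realType) (c : nat -> R) (N : nat).

Definition dirichlet_op (h : nat -> R) : nat -> R :=
  fun k => if (0 < k < N)%N then (h k.+1 - 2 * h k + h k.-1) - c k * h k else 0.

Lemma dirichlet_op_rec h n : (n.+2 <= N)%N ->
  h n.+2 = (2 + c n.+1) * h n.+1 - h n + dirichlet_op h n.+1.
Proof. by move=> nN; rewrite /dirichlet_op ifT /=; [ring | lia]. Qed.

Lemma dirichlet_op_shoot g a b k : (0 < k < N)%N ->
  dirichlet_op (shoot c g a b) k = g k.
Proof.
by case: k => [//|k] kN; rewrite /dirichlet_op kN shootSS; ring.
Qed.

Lemma dirichlet_op_EN h : EN N (dirichlet_op h).
Proof. by rewrite /EN /dirichlet_op /= ltnn andbF. Qed.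

Lemma dirichlet_op_solution {g h : nat -> R} : h 0%N = 0 ->
    (forall k, (k <= N)%N -> dirichlet_op h k = g k) ->
  forall k, (k <= N)%N ->
    h k = shoot c g 0 0 k + h 1%N * shoot c (fun=> 0) 0 1 k.
Proof.
move=> h0 op_h k kN; rewrite -shoot_affine -[in shoot _ _ _]h0.
apply: shoot_unique kN => n nN.
by rewrite -op_h; [exact: dirichlet_op_rec | exact: ltnW].
Qed.

Hypothesis shootN_neq0 : shoot c (fun=> 0) 0 1 N != 0.

Lemma dirichlet_op_surj y : EN N y ->
  exists h, EN N h /\ forall k, (k <= N)%N -> dirichlet_op h k = y k.
Proof.
move=> [y0 yN].
exists (shoot c y 0 (- shoot c y 0 0 N / shoot c (fun=> 0) 0 1 N)); split.
  by rewrite /EN shoot0 shoot_affine divfK // subrr.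
move=> k kN; have [k_in | k_out] := boolP (0 < k < N)%N.
  exact: dirichlet_op_shoot.
rewrite /dirichlet_op (negbTE k_out).
by have /orP[/eqP-> | /eqP->] : (k == 0) || (k == N) by lia.
Qed.

Lemma dirichlet_op_inj h1 h2 : EN N h1 -> EN N h2 ->
    (forall k, (k <= N)%N -> dirichlet_op h1 k = dirichlet_op h2 k) ->
  forall k, (k <= N)%N -> h1 k = h2 k.
Proof.
move=> [h10 h1N] [h20 h2N] op_eq.
pose g := dirichlet_op h1.
have h1E := dirichlet_op_solution h10 (fun k _ => erefl : dirichlet_op h1 k = g k).
have h2E := dirichlet_op_solution h20 (fun k kN => esym (op_eq k kN) : _ = g k).
have h11 : h1 1%N = h2 1%N.
  apply: (mulIf shootN_neq0); apply: (addrI (shoot c g 0 0 N)).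
  by rewrite -h1E // -h2E // h1N h2N.
by move=> k kN; rewrite h1E // h2E // h11.
Qed.

Lemma dirichlet_op_invertible : invertible_on_EN N dirichlet_op.
Proof.
split; first by move=> h _; apply: dirichlet_op_EN.
by split; [apply: dirichlet_op_surj | apply: dirichlet_op_inj].
Qed.

End DirichletOperator.

Theorem lemma10 (R : realType) (N : nat) (f : R -> R -> R) :
  (2 <= N)%N ->
  {within [set p : R * R | 0 <= p.1 <= 1], continuous (fun p : R * R => f p.1 p.2)} ->
  (forall t s : R, 0 <= t <= 1 -> derivable (f t) s 1) ->
  {within [set p : R * R | 0 <= p.1 <= 1], continuous (fun p : R * R => fx f p.1 p.2)} ->
  (exists m : R, -1 < m /\ forall t s : R, 0 <= t <= 1 -> m <= fx f t s) ->
  forall x : nat -> R, EN N x -> invertible_on_EN N (DNp f N x).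
Proof.
(* Only the lower bound on f_x matters. *)
move=> N_ge2 _ _ _ [m [m_gt fx_ge]] x _.
pose c k : R := (N%:R ^+ 2)^-1 * fx f (k%:R / N%:R) (x k).
apply: (@dirichlet_op_invertible R c N).
rewrite gt_eqF // shoot_end_gt0 // => [|k /andP[k_gt0 kN]]; first lia.
apply: parabola_scaled_ge; first by rewrite k_gt0 ltnW.
have N_gt0 : 0 < N%:R :> R by rewrite ltr0n; lia.
have k_N01 : 0 <= (k%:R / N%:R : R) <= 1.
  by rewrite divr_ge0 ?ler0n //= ler_pdivrMr // mul1r ler_nat ltnW.
by have := fx_ge _ (x k) k_N01; lra.
Qed.
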